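(* Let $X$ and $Y$ be locally compact Hausdorff spaces, $p:X\to Y$ a perfect irreducible map, $f:X'\to X$ and $g:Y'\to Y$ continuous maps of topological spaces, and $p':X'\to Y'$ a closed irreducible map with $p\circ f=g\circ p'$. Then every $G\in\mathrm{RC}(X)$ satisfies $$\mathrm{cl}(g^{-1}(\mathrm{int}(p(G))))=\bigvee\{p'(\mathrm{cl}(f^{-1}(\mathrm{int}(H))))\mid H\in\mathrm{CR}(X),\ p(H)\subseteq\mathrm{int}(p(G))\},$$ the join being taken in the Boolean algebra $\mathrm{RC}(Y')$.
   Context: For a space $X$, $\mathrm{RC}(X)$ is the complete Boolean algebra of regular closed sets ($F=\mathrm{cl}(\mathrm{int}F)$), in which $\bigvee_i F_i=\mathrm{cl}(\bigcup_i F_i)$; $\mathrm{CR}(X)$ is the set of compact regular closed subsets. A perfect map is a continuous closed map with compact fibres; an irreducible map is a continuous surjection such that no proper closed subset of the domain is mapped onto the codomain. *)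

From HB Require Import structures.
From mathcomp Require Import all_boot all_order.
From mathcomp Require Import boolp classical_sets functions topology.
Set Implicit Arguments. Unset Strict Implicit. Unset Printing Implicit Defensive.
Local Open Scope classical_set_scope.

Definition regular_closed {T : topologicalType} (F : set T) : Prop :=
  F = closure (interior F).

Definition compact_regular_closed {T : topologicalType} (F : set T) : Prop :=
  compact F /\ regular_closed F.

(* join in RC(X) of a family of regular closed sets: cl(union) *)
Definition rc_join {T : topologicalType} (S : set (set T)) : set T :=
  closure (\bigcup_(F in S) F).

Definition closed_map {S T : topologicalType} (h : S -> T) : Prop :=
  forall A : set S, closed A -> closed (h @` A).

Definition perfect_map {S T : topologicalType} (h : S -> T) : Prop :=
  [/\ continuous h, closed_map h & forall y : T, compact (h @^-1` [set y])].

Definition irreducible_map {S T : topologicalType} (h : S -> T) : Prop :=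
  [/\ continuous h, h @` setT = setT &
      forall A : set S, closed A -> h @` A = setT -> A = setT].

From HB Require Import structures.
From mathcomp Require Import all_boot all_order.
From mathcomp Require Import boolp classical_sets functions topology.
Set Implicit Arguments.
Unset Strict Implicit.
Local Open Scope classical_set_scope.

(* Both sides are closures, so it suffices to trap the union on the right
   between [g @^-1` U] and its closure, where [U = int p(G)].  Each piece
   [p'(cl f^-1(int H))] lies in [cl g^-1(U)] by continuity of [p'] and the
   commuting square.  Conversely a point [p' x'] with [g (p' x') \in U] has
   [f x'] in the open set [p^-1(U)], and local compactness with the Hausdorff
   property yields a compact regular closed [H] inside [p^-1(U)] with [f x']
   in its interior. *)

Section closure_lemmas.
Variable T : topologicalType.
Implicit Types A B : set T.

Lemma closure_subclosure A B : A `<=` closure B -> closure A `<=` closure B.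
Proof.
move=> /closureS; rewrite -[closure (closure B)](closure_id _).1 //.
exact: closed_closure.
Qed.

Lemma closure_eq_sandwich A B : A `<=` B -> B `<=` closure A ->
  closure A = closure B.
Proof.
move=> AB BcA; apply/seteqP; split; first exact: closureS.
exact: closure_subclosure.
Qed.

Lemma regular_closed_closure_interior A : regular_closed (closure (interior A)).
Proof. exact/esym/closure_interior_idem. Qed.

Lemma compact_regular_closed_nbhs (x : T) (U : set T) :
  hausdorff_space T -> locally_compact [set: T] -> nbhs x U ->
  exists H : set T, [/\ compact_regular_closed H, H `<=` U & nbhs x H].
Proof.
move=> hsT lcT Ux.
have [//|V + [cptV _]] := lcT x; rewrite withinET => Vx.
have UVx : nbhs x (U `&` V) by apply: filterI.
have regx := compact_regular hsT cptV Vx.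
have [W Wx clWUV] := regx _ UVx.
have HW : closure (interior W) `<=` closure W.
  by apply: closureS; exact: interior_subset.
exists (closure (interior W)); split.
- split; last exact: regular_closed_closure_interior.
  apply: (subclosed_compact _ cptV); first exact: closed_closure.
  by move=> y /HW /clWUV [].
- by move=> y /HW /clWUV [].
- by apply: filterS (nbhs_interior Wx); exact: subset_closure.
Qed.

End closure_lemmas.

Lemma continuous_image_closure (S T : topologicalType) (h : S -> T)
    (A : set S) :
  continuous h -> h @` closure A `<=` closure (h @` A).
Proof.
move=> ch _ [x clAx <-] B /ch /clAx [a [Aa Ba]].
by exists (h a); split => //; exists a.
Qed.

Section commuting_square.
Variables (X Y X' Y' : topologicalType).
Variables (p : X -> Y) (f : X' -> X) (g : Y' -> Y) (p' : X' -> Y').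
Hypothesis pf_gp' : p \o f = g \o p'.

Let pf_gp'E x' : p (f x') = g (p' x').
Proof. by have := congr1 (fun h => h x') pf_gp'. Qed.

Lemma image_closure_preimage_sub (H : set X) (U : set Y) :
  continuous p' -> p @` H `<=` U ->
  p' @` closure (f @^-1` H) `<=` closure (g @^-1` U).
Proof.
move=> cp' pHU; apply: subset_trans (continuous_image_closure cp') _.
apply: closureS => _ [x' Hfx' <-].
by rewrite /preimage /= -pf_gp'E; apply: pHU; exists (f x').
Qed.

Lemma preimage_sub_bigcup_compact_regular_closed (U : set Y) :
  hausdorff_space X -> locally_compact [set: X] ->
  continuous p -> p' @` setT = setT -> open U ->
  g @^-1` U `<=`
    \bigcup_(H in [set H | compact_regular_closed H /\ p @` H `<=` U])
      p' @` closure (f @^-1` interior H).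
Proof.
move=> hsX lcX cp sp' oU y'.
have [x' _ <- Ugp'x'] : (p' @` setT) y' by rewrite sp'.
have Upfx' : nbhs (f x') (p @^-1` U).
  by apply: cp; apply: open_nbhs_nbhs; split => //; rewrite pf_gp'E.
have [H [cH HpU Hfx']] := compact_regular_closed_nbhs hsX lcX Upfx'.
exists H; first by split => // _ [x Hx <-]; exact: HpU.
by exists x' => //; apply: subset_closure.
Qed.

End commuting_square.

Theorem lemma4p6 (X Y X' Y' : topologicalType)
  (p : X -> Y) (f : X' -> X) (g : Y' -> Y) (p' : X' -> Y') :
  hausdorff_space X -> locally_compact [set: X] ->
  hausdorff_space Y -> locally_compact [set: Y] ->
  perfect_map p -> irreducible_map p ->
  continuous f -> continuous g ->
  closed_map p' -> irreducible_map p' ->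
  p \o f = g \o p' ->
  forall G : set X, regular_closed G ->
    closure (g @^-1` interior (p @` G)) =
    rc_join [set p' @` closure (f @^-1` interior H) | H in
              [set H : set X | compact_regular_closed H /\
                               p @` H `<=` interior (p @` G)]].
Proof.
move=> hsX lcX _ _ [cp _ _] _ _ _ _ [cp' sp' _] pf_gp' G _.
rewrite /rc_join bigcup_image; apply: closure_eq_sandwich.
- exact: preimage_sub_bigcup_compact_regular_closed (open_interior _).
- apply: bigcup_sub => H [_ pHU].
  apply: (image_closure_preimage_sub pf_gp' cp').
  by apply: subset_trans pHU; apply: image_subset; exact: interior_subset.
Qed.
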